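(* Let $\varpi$ be an oscillation function on $[0,R)$ that is concave and differentiable in a neighborhood of the origin, and assume: (a) $\int_0^R \varpi(r)\,\frac{dr}{r}<\infty$; (b) $\lim_{r\to0}\varpi(r)/r=+\infty$; (c) $\lim_{r\to0}\frac{\varpi(r)}{r\,\varpi'(r)}=C_1$ for some $C_1\in(1,+\infty]$. For $0<r<R$ set $$B(r)=\frac{r\int_r^{R}\frac{\varpi(s)}{s^2}\,ds}{\int_0^r\frac{\varpi(s)}{s}\,ds}.$$ Then $\lim_{r\to0}B(r)=\frac{1}{C_1-1}$ (interpreted as $0$ if $C_1=+\infty$). In particular there is a constant $C_2>0$ such that $B(r)\le C_2$ for all $r$ in some neighborhood of the origin.
   Context: An oscillation function is a real, continuous, non-decreasing function $\varpi$ defined on $[0,R)$ for some $R>0$, with $\varpi(0)=0$ and $\varpi(r)>0$ for $r>0$. ''Differentiable'' means pointwise differentiable at each $r>0$ in a neighborhood of the origin. *)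

From HB Require Import structures.
From mathcomp Require Import all_boot all_order all_algebra.
From mathcomp Require Import all_classical all_reals all_analysis.
Set Implicit Arguments. Unset Strict Implicit. Unset Printing Implicit Defensive.
Import Order.TTheory GRing.Theory Num.Theory.
Import numFieldNormedType.Exports.
Local Open Scope classical_set_scope.
Local Open Scope ring_scope.

Definition oscillation_fun {R : realType} (R0 : R) (w : R -> R) : Prop :=
  0 < R0 /\
  {within `[0, R0[, continuous w} /\
  {in `[0, R0[ &, forall x y, x <= y -> w x <= w y} /\
  w 0 = 0 /\
  (forall r, 0 < r < R0 -> 0 < w r).

Definition concave_on {R : realType} (A : set R) (w : R -> R) : Prop :=
  forall x y t, A x -> A y -> 0 <= t <= 1 ->
    (1 - t) * w x + t * w y <= w ((1 - t) * x + t * y).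

Definition oscB {R : realType} (R0 : R) (w : R -> R) (r : R) : R :=
  r * fine (\int[lebesgue_measure]_(s in `]r, R0[) (w s / s ^+ 2)%:E)
    / fine (\int[lebesgue_measure]_(s in `]0, r[) (w s / s)%:E).

Definition oscB_limit {R : realType} (C1 : \bar R) : R :=
  match C1 with
  | EFin c => 1 / (c - 1)
  | _ => 0
  end.

From HB Require Import structures.
From mathcomp Require Import all_boot all_order all_algebra.
From mathcomp Require Import all_classical all_reals all_analysis.
From mathcomp Require Import ring lra measurable_realfun.
Import Order.TTheory GRing.Theory Num.Theory.
Import numFieldNormedType.Exports.
Local Open Scope classical_set_scope.
Local Open Scope ring_scope.

(* Write u(r) = w(r)/r, G(r) = int_r^R w(s)/s^2 ds and F(r) = int_0^r w(s)/s ds,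
   so that B = r G / F.  Since u -> +oo and G'/u' = w / (w - r w') = q / (q - 1)
   with q = w / (r w') -> C1, L'Hopital's rule at infinity gives
   G/u -> C1 / (C1 - 1).  Hence r G = w (G/u) -> 0; as also F -> 0, L'Hopital's
   rule for 0/0 gives B -> lim (rG)'/F' = lim (G - u)/u = 1 / (C1 - 1). *)

Local Notation mu := (@lebesgue_measure _).

Lemma near_at_right_itv {R : realType} {P : R -> Prop} {a : R} :
  (\forall x \near a^'+, P x) -> exists2 c, a < c & forall x, a < x < c -> P x.
Proof.
move=> [D /= D0 H]; exists (a + D); first by rewrite ltrDl.
move=> x /andP[ax xc]; apply: H => //=.
by rewrite /ball_ /= distrC gtr0_norm ?subr_gt0 // ltrBlDl.
Qed.

Lemma cvg_near_ub {R : realFieldType} {T : Type} {F : set_system T}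
    {FF : Filter F} {f : T -> R} {l : R} :
  f @ F --> l -> exists2 C, 0 < C & \forall x \near F, f x <= C.
Proof.
move=> /cvgrPdist_le /(_ 1 ltr01) fl.
exists (`|l| + 1); first by rewrite ltr_pwDr.
apply: filterS fl => x; rewrite distrC ler_norml => /andP[_].
by have := ler_norm l; lra.
Qed.

Lemma div_gt1_itv {R : realFieldType} {a d : R} : 0 < a -> 1 < a / d -> 0 < d < a.
Proof.
move=> a0 ad; have d0 : 0 < d.
  rewrite ltNge; apply/negP => d_le0.
  have : a / d <= 0 by rewrite pmulr_rle0 // invr_le0.
  lra.
by move: ad; rewrite ltr_pdivlMr // mul1r d0.
Qed.

Lemma lhopital_infty_estimate {R : realFieldType} {e l q fx gx fy gy : R} :
  0 < e -> `|l - q| < e / 3 -> `|gy| + `|fy - l * gy| / (e / 3) < gx ->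
  fx = fy - q * (gy - gx) -> `|l - fx / gx| <= e.
Proof.
move=> e0 lqe gxM ->.
have e3 : 0 < e / 3 by rewrite divr_gt0.
have K0 : 0 <= `|fy - l * gy| / (e / 3) by rewrite divr_ge0 // ltW.
have gy_lt : `|gy| < gx by lra.
have gx0 : 0 < gx by have := normr_ge0 gy; lra.
have fy_lt : `|fy - l * gy| < gx * (e / 3).
  by rewrite -ltr_pdivrMr //; apply: le_lt_trans gxM; rewrite ler_wpDl.
have gyx : `|gy - gx| <= 2 * gx.
  by apply: le_trans (ler_normB _ _) _; rewrite (gtr0_norm gx0); lra.
rewrite -(ler_pM2r gx0) -[X in _ * X <= _](gtr0_norm gx0) -normrM.
rewrite mulrBl divfK ?gt_eqF //.
have -> : l * gx - (fy - q * (gy - gx)) = - (fy - l * gy) - (l - q) * (gy - gx).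
  by ring.
apply: le_trans (ler_normB _ _) _; rewrite normrN normrM.
have := normr_ge0 (l - q); nra.
Qed.

Lemma lhopital_at_right_infty {R : realType} {f df g dg : R -> R} {a b l : R} :
  a < b ->
  (forall x, x \in `]a, b[ -> is_derive x 1 f (df x)) ->
  (forall x, x \in `]a, b[ -> is_derive x 1 g (dg x)) ->
  (forall x, x \in `]a, b[ -> dg x != 0) ->
  g x @[x --> a^'+] --> +oo ->
  df x / dg x @[x --> a^'+] --> l -> f x / g x @[x --> a^'+] --> l.
Proof.
move=> ab fdf gdg dg0 /cvgryPgt goo fgl.
apply/cvgrPdist_le => e e0.
have e3 : 0 < e / 3 by rewrite divr_gt0.
move/cvgrPdist_lt: fgl => /(_ _ e3) /near_at_right_itv [c ac Hc].
pose y := (a + Num.min b c) / 2.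
have am : a < Num.min b c by rewrite lt_min ab ac.
have [mb mc] : Num.min b c <= b /\ Num.min b c <= c by rewrite !ge_min !lexx orbT.
have [ay yb yc] : [/\ a < y, y < b & y < c] by rewrite /y; split; lra.
near=> x.
have ax : a < x by near: x; exact: nbhs_right_gt.
have xy : x < y by near: x; exact: nbhs_right_lt.
have gxM : `|g y| + `|f y - l * g y| / (e / 3) < g x by near: x; exact: goo.
have xy_ab z : x <= z <= y -> z \in `]a, b[.
  by rewrite in_itv /= => /andP[? ?]; apply/andP; split; lra.
have xy_cc z : z \in `[x, y] -> z \in `]a, b[ by rewrite in_itv; exact: xy_ab.
have xy_oo z : z \in `]x, y[ -> z \in `]a, b[.
  by rewrite in_itv /= => /andP[? ?]; apply: xy_ab; apply/andP; split; apply: ltW.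
have cf : {within `[x, y], continuous f}.
  by apply: derivable_within_continuous => z /xy_cc /fdf fz; exact: ex_derive.
have cg : {within `[x, y], continuous g}.
  by apply: derivable_within_continuous => z /xy_cc /gdg gz; exact: ex_derive.
have [t txy tE] := cauchy_MVT xy cf cg (fun z h => fdf z (xy_oo z h))
  (fun z h => gdg z (xy_oo z h)) (fun z h => dg0 z (xy_oo z h)).
have gyx : g y - g x != 0 := differentiable_subr_neq0 xy cg
  (fun z h => gdg z (xy_oo z h)) (fun z h => dg0 z (xy_oo z h)).
have fxE : f x = f y - df t / dg t * (g y - g x).
  by rewrite tE divfK //; ring.
apply: (lhopital_infty_estimate e0 _ gxM fxE).
apply: Hc; move: txy; rewrite in_itv /= => /andP[xt ty].
by rewrite (lt_trans ax xt) (lt_trans ty yc).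
Unshelve. all: by end_near. Qed.

Lemma is_derive_Rintegral_itv_upper {R : realType} {f : R -> R} {a b x : R} :
  mu.-integrable `]a, b[ (EFin \o f) -> a < x -> x < b -> {for x, continuous f} ->
  is_derive x 1 (fun r => \int[mu]_(s in `]a, r[) f s) (f x).
Proof.
move=> fi ax xb fx.
have xu : x < (x + b) / 2 by lra.
have fiu : mu.-integrable `]a, (x + b) / 2] (EFin \o f).
  by apply: integrableS fi => //; apply: subset_itvl; rewrite bnd_simp; lra.
have [dF DF] := continuous_FTC1 xu fiu (ltac:(by rewrite lte_fin)) fx.
rewrite -DF derive1E; apply: near_eq_is_derive (derivableP dF).
near=> r; rewrite Rintegral_itv_bndo_bndc //.
apply: integrableS fi => //; apply: subset_itvl; rewrite bnd_simp ltW //.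
by near: r; exact: lt_nbhsl.
Unshelve. all: by end_near. Qed.

Lemma is_derive_Rintegral_itv_lower {R : realType} {f : R -> R} {a b x : R} :
  mu.-integrable `]a, b[ (EFin \o f) -> a < x -> x < b -> {for x, continuous f} ->
  is_derive x 1 (fun r => \int[mu]_(s in `]r, b[) f s) (- f x).
Proof.
move=> fi ax xb fx.
have D : is_derive x 1
    (fun r => \int[mu]_(s in `]a, b[) f s - \int[mu]_(s in `]a, r[) f s) (0 - f x).
  by apply: is_deriveB; exact: (is_derive_Rintegral_itv_upper fi ax xb fx).
rewrite sub0r in D; apply: near_eq_is_derive D.
near=> r.
have ar : a < r by near: r; exact: lt_nbhsr.
have rb : r < b by near: r; exact: lt_nbhsl.
rewrite [X in _ - X = _]Rintegral_itv_bndo_bndc; last first.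
  by apply: integrableS fi => //; apply: subset_itvl; rewrite bnd_simp ltW.
by apply: Rintegral_itvB => //; rewrite bnd_simp ltW.
Unshelve. all: by end_near. Qed.

Lemma Rintegral_itv_cvg0 {R : realType} {f : R -> R} {a b : R} :
  a < b -> mu.-integrable `]a, b[ (EFin \o f) ->
  (fun r => \int[mu]_(s in `]a, r[) f s) @ a^'+ --> 0.
Proof.
move=> ab fi; pose c := (a + b) / 2.
have ac : a < c by rewrite /c; lra.
have cb : c < b by rewrite /c; lra.
have fic : mu.-integrable `]a, c] (EFin \o f).
  by apply: integrableS fi => //; apply: subset_itvl; rewrite bnd_simp.
have fic' : mu.-integrable `[a, c] (EFin \o f).
  rewrite (negligible_integrable _ _ _ (lebesgue_measure_set1 a)) ?setDitv1l //.
  by apply/measurable_EFinP/measurable_fun_itv_obnd_cbndP;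
    case/integrableP: fic => /measurable_EFinP.
move: (parameterized_integral_cvg_left ac fic') => /(cvg_within_filter (fun x => a < x)).
apply: cvg_trans; apply: near_eq_cvg; near=> r.
have ar : a < r by near: r; exact: nbhs_right_gt.
have rc : r < c by near: r; exact: nbhs_right_lt.
rewrite /parameterized_integral /= -Rintegral_itv_obnd_cbnd; last first.
  by apply: integrableS fic => //; apply: subset_itvl; rewrite bnd_simp ltW.
rewrite Rintegral_itv_bndo_bndc //.
by apply: integrableS fic => //; apply: subset_itvl; rewrite bnd_simp ltW.
Unshelve. all: by end_near. Qed.

Lemma measurable_fun_inv_pos {R : realType} :
  measurable_fun (`]0, +oo[ : set R) GRing.inv.
Proof.
apply: open_continuous_measurable_fun; first exact: interval_open.
move=> x; rewrite inE /= in_itv /= andbT => x0.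
by apply: inv_continuous; rewrite gt_eqF.
Qed.

Section oscillation_integrals.
Context {R : realType} {R0 : R} {w : R -> R}.
Hypothesis osc : oscillation_fun R0 w.

Let w_cont : {within `[0, R0[, continuous w}. Proof. by case: osc => _ []. Qed.

Let w_gt0 x : 0 < x < R0 -> 0 < w x. Proof. by case: osc => _ [_ [_ [_]]]; apply. Qed.

Lemma oscillation_fun_cvg0 : w x @[x --> 0^'+] --> 0.
Proof.
have [R0_gt0 [_ [_ [w0 _]]]] := osc.
have R02 : 0 < R0 / 2 by lra.
have sub : `[0, R0 / 2] `<=` `[0, R0[ by apply: subset_itvl; rewrite bnd_simp; lra.
move: (continuous_subspaceW sub w_cont) => /(continuous_within_itvP _ R02) [_ w0_cvg _].
by rewrite w0 in w0_cvg.
Qed.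

Let measurable_fun_inv : measurable_fun `]0, R0[ GRing.inv.
Proof.
apply: (measurable_funS _ _ measurable_fun_inv_pos) => //.
by apply: subset_itvl; rewrite bnd_simp.
Qed.

Lemma measurable_fun_w_div : measurable_fun `]0, R0[ (fun s => w s / s).
Proof.
apply: measurable_funM measurable_fun_inv.
apply: (measurable_funS _ _ (subspace_continuous_measurable_fun _ w_cont)) => //.
by apply: subset_itvr; rewrite bnd_simp.
Qed.

Lemma measurable_fun_w_div_sqr : measurable_fun `]0, R0[ (fun s => w s / s ^+ 2).
Proof.
rewrite (_ : (fun s => _) = (fun s => w s / s * s^-1)); last first.
  by apply/funext => s; rewrite expr2 invfM mulrA.
exact: measurable_funM measurable_fun_w_div measurable_fun_inv.
Qed.

Hypothesis fin : (\int[mu]_(r in `]0%R, R0[) (w r / r)%:E < +oo)%E.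

Lemma integrable_w_div : mu.-integrable `]0, R0[ (EFin \o (fun s => w s / s)).
Proof.
apply/integrableP; split; first by apply/measurable_EFinP; exact: measurable_fun_w_div.
rewrite (_ : (\int[mu]_(x in `]0%R, R0[) `|(w x / x)%:E|)%E
           = (\int[mu]_(x in `]0%R, R0[) (w x / x)%:E)%E) //.
apply: eq_integral => x; rewrite inE /= in_itv /= => /andP[x0 xR].
by rewrite /= ger0_norm // divr_ge0 // ltW // w_gt0 // x0 xR.
Qed.

Lemma integrable_w_div_sqr c : 0 < c ->
  mu.-integrable `]c, R0[ (EFin \o (fun s => w s / s ^+ 2)).
Proof.
move=> c0.
have sub : `]c, R0[ `<=` `]0, R0[ by apply: subset_itvr; rewrite bnd_simp ltW.
have : mu.-integrable `]c, R0[ (fun x => (c^-1)%:E * (EFin \o (fun s => (w s / s)%R)) x)%E.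
  by apply: integrableZl => //; apply: integrableS integrable_w_div.
apply: le_integrable => //.
  by apply/measurable_EFinP; exact: measurable_funS measurable_fun_w_div_sqr.
move=> x; rewrite /= in_itv /= => /andP[cx xR].
have x0 : 0 < x by apply: lt_trans cx.
have wx : 0 <= w x by apply: ltW; apply: w_gt0; rewrite x0 xR.
rewrite lee_fin ger0_norm; last by rewrite divr_ge0 // exprn_ge0 // ltW.
rewrite ger0_norm; last by apply: mulr_ge0; rewrite ?invr_ge0 ?divr_ge0 // ltW.
rewrite expr2 invfM mulrA mulrC; apply: ler_wpM2r; first by rewrite divr_ge0 // ltW.
by rewrite lef_pV2 ?ltW // posrE.
Qed.

End oscillation_integrals.

Lemma cvg_ratio_oscB_limit {R : realType} {T : Type} {F : set_system T}
    {FF : Filter F} {q : T -> R} {C1 : \bar R} :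
  (1 < C1)%E -> (fun x => (q x)%:E) @ F --> C1 ->
  (\forall x \near F, 1 < q x) /\ q x / (q x - 1) @[x --> F] --> oscB_limit C1 + 1.
Proof.
case: C1 => [c| |] //=.
- rewrite lte_fin => c1 /fine_cvgP [_ qc].
  split.
    have c10 : 0 < c - 1 by rewrite subr_gt0.
    near=> x.
    have : `|c - q x| < c - 1 by near: x; exact: cvgr_dist_lt.
    by rewrite ltr_norml => /andP[_]; lra.
  have -> : 1 / (c - 1) + 1 = c * (c - 1)^-1 by field; rewrite subr_eq0 gt_eqF.
  apply: cvgM => //; apply: cvgV; first by rewrite subr_eq0 gt_eqF.
  by apply: cvgB => //; exact: cvg_cst.
- move=> _ /cvgeryP /cvgryPgt qy.
  have q_gt1 : \forall x \near F, 1 < q x by exact: qy.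
  split => //; rewrite add0r.
  have q1y : (fun x => q x - 1) @ F --> +oo.
    by apply/cvgryPgt => A; apply: filterS (qy (A + 1)) => x; lra.
  have : (fun x => 1 + (q x - 1)^-1) @ F --> (1 + 0 : R).
    apply: cvgD; first exact: cvg_cst.
    by apply/gtr0_cvgV0 => //; apply: filterS q_gt1 => x; lra.
  rewrite addr0; apply: cvg_trans; apply: near_eq_cvg; near=> x.
  have : 1 < q x by near: x.
  by move=> q1; rewrite /=; field; rewrite subr_eq0 gt_eqF.
Unshelve. all: by end_near. Qed.

Section oscB_near0.
Context {R : realType} {R0 b k : R} {w : R -> R}.
Hypotheses (osc : oscillation_fun R0 w)
  (fin : (\int[mu]_(r in `]0%R, R0[) (w r / r)%:E < +oo)%E)
  (b_gt0 : 0 < b) (b_le : b <= R0)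
  (w_derivable : forall x, x \in `]0, b[ -> derivable w x 1)
  (w_dw_lt : forall x, x \in `]0, b[ -> 0 < x * derive1 w x < w x)
  (w_div_cvgy : w x / x @[x --> 0^'+] --> +oo)
  (ratio_cvg : w x / (w x - x * derive1 w x) @[x --> 0^'+] --> k).

Let near0_itv : \forall x \near 0^'+, x \in `]0, b[.
Proof.
near=> x; rewrite in_itv /=; apply/andP; split.
  by near: x; exact: nbhs_right_gt.
by near: x; exact: nbhs_right_lt.
Unshelve. all: by end_near. Qed.

Let itv_pos {x} : x \in `]0, b[ -> 0 < x /\ x < R0.
Proof. by rewrite in_itv /= => /andP[x0 xb]; split => //; exact: lt_le_trans b_le. Qed.

Let w_gt0 {x} : x \in `]0, b[ -> 0 < w x.
Proof. by move=> /w_dw_lt /andP[xw' w'w]; exact: lt_trans w'w. Qed.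

Let is_derive_w {x} : x \in `]0, b[ -> is_derive x 1 w (derive1 w x).
Proof. by move=> /w_derivable /derivableP; rewrite derive1E. Qed.

Let continuous_w {x} : x \in `]0, b[ -> {for x, continuous w}.
Proof.
move=> /w_derivable wx; apply: differentiable_continuous.
exact/derivable1_diffP.
Qed.

Let is_derive_w_div x : x \in `]0, b[ ->
  is_derive x 1 (fun s => w s / s) (derive1 w x / x - w x / x ^+ 2).
Proof.
move=> xb; have [x0 _] := itv_pos xb.
have := is_deriveM (is_derive_w xb) (is_deriveV (lt0r_neq0 x0) (is_derive_id x 1)).
rewrite /GRing.scale /=; congr is_derive; field; exact: lt0r_neq0.
Qed.

Let is_derive_tail x : x \in `]0, b[ ->
  is_derive x 1 (fun r => \int[mu]_(s in `]r, R0[) (w s / s ^+ 2)) (- (w x / x ^+ 2)).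
Proof.
move=> xb; have [x0 xR] := itv_pos xb; have cwx := continuous_w xb.
have x2 : 0 < x / 2 by rewrite divr_gt0.
apply: (is_derive_Rintegral_itv_lower (integrable_w_div_sqr osc fin _ x2)) => //.
  by rewrite ltr_pdivrMr // ltr_pMr // ltr1n.
apply: continuousM => //; apply: continuousV; first by rewrite expf_neq0 // lt0r_neq0.
exact: exprn_continuous.
Qed.

Let is_derive_head x : x \in `]0, b[ ->
  is_derive x 1 (fun r => \int[mu]_(s in `]0, r[) (w s / s)) (w x / x).
Proof.
move=> xb; have [x0 xR] := itv_pos xb; have cwx := continuous_w xb.
apply: (is_derive_Rintegral_itv_upper (integrable_w_div osc fin)) => //.
by apply: continuousM => //; apply: inv_continuous; exact: lt0r_neq0.
Qed.

Lemma tail_div_w_div_cvg :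
  (\int[mu]_(s in `]x, R0[) (w s / s ^+ 2)) / (w x / x) @[x --> 0^'+] --> k.
Proof.
apply: (lhopital_at_right_infty b_gt0 is_derive_tail is_derive_w_div) => //.
  move=> x xb; have [x0 _] := itv_pos xb; have /andP[_ w'w] := w_dw_lt _ xb.
  have -> : derive1 w x / x - w x / x ^+ 2 = (x * derive1 w x - w x) / x ^+ 2.
    by field; exact: lt0r_neq0.
  apply: mulf_neq0; first by rewrite subr_eq0 lt_eqF.
  by rewrite invr_neq0 // expf_neq0 // lt0r_neq0.
apply: cvg_trans ratio_cvg; apply: near_eq_cvg; near=> x.
have xb : x \in `]0, b[ by near: x; exact: near0_itv.
have [x0 _] := itv_pos xb; have /andP[_ w'w] := w_dw_lt _ xb.
rewrite /=; field.
rewrite lt0r_neq0 //= subr_eq0 [_ * x]mulrC lt_eqF //=.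
by rewrite subr_eq0 gt_eqF.
Unshelve. all: by end_near. Qed.

Lemma mul_tail_cvg0 :
  x * \int[mu]_(s in `]x, R0[) (w s / s ^+ 2) @[x --> 0^'+] --> 0.
Proof.
have : w x * ((\int[mu]_(s in `]x, R0[) (w s / s ^+ 2)) / (w x / x))
    @[x --> 0^'+] --> 0 * k.
  by apply: cvgM; [exact: (oscillation_fun_cvg0 osc) | exact: tail_div_w_div_cvg].
rewrite mul0r; apply: cvg_trans; apply: near_eq_cvg; near=> x.
have xb : x \in `]0, b[ by near: x; exact: near0_itv.
have [x0 _] := itv_pos xb; have wx := w_gt0 xb.
by rewrite /=; field; rewrite !lt0r_neq0.
Unshelve. all: by end_near. Qed.

Let is_derive_mul_tail x : x \in `]0, b[ ->
  is_derive x 1 (fun r => r * \int[mu]_(s in `]r, R0[) (w s / s ^+ 2))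
    (\int[mu]_(s in `]x, R0[) (w s / s ^+ 2) - w x / x).
Proof.
move=> xb; have [x0 _] := itv_pos xb.
have := is_deriveM (is_derive_id x 1) (is_derive_tail _ xb).
rewrite /GRing.scale /=; congr is_derive; field; exact: lt0r_neq0.
Qed.

Lemma oscB_cvg_near0 : oscB R0 w x @[x --> 0^'+] --> k - 1.
Proof.
have R0_gt0 : 0 < R0 := lt_le_trans b_gt0 b_le.
rewrite /oscB; apply: (lhopital_at_right b_gt0 is_derive_mul_tail is_derive_head
  mul_tail_cvg0 (Rintegral_itv_cvg0 R0_gt0 (integrable_w_div osc fin))).
  move=> x xb; have [x0 _] := itv_pos xb.
  by rewrite mulf_eq0 invr_eq0 (gt_eqF (w_gt0 xb)) (gt_eqF x0).
have : (\int[mu]_(s in `]x, R0[) (w s / s ^+ 2)) / (w x / x) - 1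
    @[x --> 0^'+] --> k - 1.
  by apply: cvgB; [exact: tail_div_w_div_cvg | exact: cvg_cst].
apply: cvg_trans; apply: near_eq_cvg; near=> x.
have xb : x \in `]0, b[ by near: x; exact: near0_itv.
have [x0 _] := itv_pos xb; have wx := w_gt0 xb.
by rewrite /=; field; rewrite !lt0r_neq0.
Unshelve. all: by end_near. Qed.

End oscB_near0.

Theorem lemma3p1 (R : realType) (R0 : R) (w : R -> R) (C1 : \bar R) :
  oscillation_fun R0 w ->
  (exists2 delta : R, 0 < delta <= R0 &
     concave_on `[0, delta[ w /\
     (forall r, 0 < r < delta -> derivable w r 1)) ->
  (\int[lebesgue_measure]_(r in `]0%R, R0[) (w r / r)%:E < +oo)%E ->
  (w r / r @[r --> 0^'+] --> +oo) ->
  (1 < C1)%E ->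
  ((fun r => (w r / (r * derive1 w r))%:E) @ 0^'+ --> C1) ->
  ((fun r => (oscB R0 w r)%:E) @ 0^'+ --> (oscB_limit C1)%:E) /\
  (exists2 C2 : R, 0 < C2 & \forall r \near 0^'+, oscB R0 w r <= C2).
Proof.
move=> osc [d /andP[d_gt0 d_le] [_ w_derivable]] fin w_div_cvgy C1_gt1 q_cvg.
have [q_gt1 q_ratio_cvg] := cvg_ratio_oscB_limit C1_gt1 q_cvg.
have [c c_gt0 q_gt1_itv] := near_at_right_itv q_gt1.
pose b := Num.min c d.
have b_gt0 : 0 < b by rewrite lt_min c_gt0 d_gt0.
have [b_le_c b_le_d] : b <= c /\ b <= d by rewrite !ge_min !lexx orbT.
have w_dw_lt x : x \in `]0, b[ -> 0 < x * derive1 w x < w x.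
  rewrite in_itv /= => /andP[x0 xb].
  apply: div_gt1_itv (q_gt1_itv x _); last by rewrite x0 (lt_le_trans xb).
  by case: osc => _ [_ [_ [_ ->]]] //; rewrite x0 (lt_le_trans xb) // (le_trans b_le_d).
have ratio_cvg : w x / (w x - x * derive1 w x) @[x --> 0^'+] --> oscB_limit C1 + 1.
  apply: cvg_trans q_ratio_cvg; apply: near_eq_cvg; near=> x.
  have /w_dw_lt /andP[dw_gt0 dw_lt] : x \in `]0, b[.
    by rewrite in_itv /=; apply/andP; split; near: x;
      [exact: nbhs_right_gt | exact: nbhs_right_lt].
  move: (lt0r_neq0 dw_gt0); rewrite mulf_eq0 negb_or => /andP[x_neq0 dw_neq0].
  by rewrite /=; field; rewrite subr_eq0 gt_eqF ?dw_neq0 ?x_neq0.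
have oscB_cvg : oscB R0 w x @[x --> 0^'+] --> oscB_limit C1.
  rewrite -[X in _ --> X](addrK 1).
  apply: (oscB_cvg_near0 osc fin b_gt0 (le_trans b_le_d d_le) _ w_dw_lt w_div_cvgy ratio_cvg).
  move=> x; rewrite in_itv /= => /andP[x0 xb]; apply: w_derivable.
  by rewrite x0 (lt_le_trans xb).
split; last exact: cvg_near_ub oscB_cvg.
by apply: cvg_EFin => //; near=> x.
Unshelve. all: by end_near. Qed.
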